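(* Let $m,n\ge2$ be integers and let $H$ be the graph on the vertex set $\{x_{i,j}: i\in[m], j\in[n]\}$ with edge set $\{\{x_{i,j},x_{i',j+1}\}: 1\le i<i'\le m,\ 1\le j\le n-1\}$. Then $\operatorname{cochord}(H)\le n-1$.
   Context: A graph is co-chordal if its complement is chordal (every induced cycle has length 3). The co-chordal cover number $\operatorname{cochord}(G)$ is the minimum $k$ such that there are co-chordal subgraphs $G_1,\dots,G_k$ of $G$ with $E(G)=\bigcup_i E(G_i)$. *)

From mathcomp Require Import all_boot.
Set Implicit Arguments. Unset Strict Implicit. Unset Printing Implicit Defensive.

Definition simple_graph (T : finType) (e : rel T) : Prop :=
  (forall x y, e x y = e y x) /\ (forall x, ~~ e x x).

Definition compl_graph (T : finType) (e : rel T) : rel T :=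
  fun x y => (x != y) && ~~ e x y.

Definition induced_cycle (T : finType) (e : rel T) (k : nat) (v : 'I_k -> T) : Prop :=
  3 <= k /\ injective v /\
  forall i j : 'I_k, e (v i) (v j) = ((j == i.+1 %% k :> nat) || (i == j.+1 %% k :> nat)).

Definition chordal (T : finType) (e : rel T) : Prop :=
  forall (k : nat) (v : 'I_k -> T), induced_cycle e v -> k = 3.

Definition cochordal (T : finType) (e : rel T) : Prop := chordal (compl_graph e).

Definition cochord_le (T : finType) (e : rel T) (k : nat) : Prop :=
  exists G : 'I_k -> rel T,
    (forall t, simple_graph (G t)) /\
    (forall t x y, G t x y -> e x y) /\
    (forall t, cochordal (G t)) /\
    (forall x y, e x y -> exists t, G t x y).

(* The graph H of the statement on vertices x_{i,j} = (i,j), i in [m], j in [n]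
   (0-indexed): edges {x_{i,j}, x_{i',j+1}} with i < i'. *)
Definition Hgraph (m n : nat) : rel ('I_m * 'I_n) :=
  fun a b =>
    (((a.1 < b.1) && (b.2 == (a.2).+1 :> nat)) ||
     ((b.1 < a.1) && (a.2 == (b.2).+1 :> nat))).

(* Split the edges of H by the pair of consecutive columns they join: the
   slice between columns t and t+1 is bipartite, and the neighbourhoods of
   its column-t vertices are nested, so it contains no induced 2K2.  In the
   complement of a graph with these two properties, an induced cycle of
   length 4 would be an induced 2K2 of the graph, and an induced cycle of
   length k >= 5 would carry the 5-cycle 0-2-4-1-3 of the graph.  Hence each
   of the n-1 slices is co-chordal. *)

From mathcomp Require Import all_boot.
From mathcomp Require Import zify.

Set Implicit Arguments.
Unset Strict Implicit.
Unset Printing Implicit Defensive.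

Definition bipartite (T : finType) (e : rel T) : Prop :=
  exists side : T -> bool, forall x y, e x y -> side x != side y.

Definition induced_2K2_free (T : finType) (e : rel T) : Prop :=
  forall a b c d, e a c -> e b d ->
    ~~ e a b -> ~~ e b c -> ~~ e c d -> ~~ e a d -> False.

Definition cycle_adj (k i j : nat) : bool := (j == i.+1 %% k) || (i == j.+1 %% k).

Lemma cycle_adjE k i j :
  i < j < k -> cycle_adj k i j = (j == i.+1) || (i == 0) && (j == k.-1).
Proof.
case/andP=> lt_ij lt_jk; rewrite /cycle_adj (@modn_small i.+1) ?(leq_ltn_trans lt_ij) //.
have [lt_j1k | le_kj1] := ltnP j.+1 k; first by rewrite modn_small //; lia.
have -> : j.+1 = k by lia.
by rewrite modnn; lia.
Qed.

Section ComplementCycles.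
Variables (T : finType) (e : rel T).

Lemma compl_induced_cycleE k (v : 'I_k -> T) : induced_cycle (compl_graph e) v ->
  forall i j : 'I_k, i != j -> e (v i) (v j) = ~~ cycle_adj k i j.
Proof.
case=> _ [inj_v adj] i j neq_ij; rewrite /cycle_adj -adj /compl_graph.
by rewrite (inj_eq inj_v) neq_ij negbK.
Qed.

Lemma bipartite_2K2_free_cochordal :
  bipartite e -> induced_2K2_free e -> cochordal e.
Proof.
move=> [side e_side] no2K2 k v cyc; have [k_ge3 _] := cyc.
case: k v cyc k_ge3 => // k v cyc k_ge3.
pose w i := v (inord i).
have wE i j : i < j <= k -> e (w i) (w j) = ~~ ((j == i.+1) || (i == 0) && (j == k)).
  move=> /andP[lt_ij le_jk]; have le_ik := ltnW (leq_trans lt_ij le_jk).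
  rewrite compl_induced_cycleE //; last by rewrite -val_eqE /= !inordK // ltn_eqF.
  by rewrite !inordK // cycle_adjE // lt_ij ltnS.
have [k_lt3 | k_gt3 | k3] := ltngtP k 3; [lia | exfalso | exfalso]; last first.
  by rewrite k3 in wE; apply: (no2K2 (w 0) (w 1) (w 2) (w 3)); rewrite wE.
(* The pairs of 0..4 not consecutive on the cycle: they form the odd cycle
   0-2-4-1-3 of e. *)
have w_far i j : i.+1 < j <= 4 -> j < i.+4 -> e (w i) (w j).
  by move=> lt_ij lt_ji4; rewrite wE; lia.
have := e_side _ _ (w_far 0 2 isT isT); have := e_side _ _ (w_far 2 4 isT isT).
have := e_side _ _ (w_far 1 4 isT isT); have := e_side _ _ (w_far 1 3 isT isT).
have := e_side _ _ (w_far 0 3 isT isT).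
by case: (side (w 0)); case: (side (w 1)); case: (side (w 2));
   case: (side (w 3)); case: (side (w 4)).
Qed.

End ComplementCycles.

Section Slices.
Variables m n : nat.
Implicit Types x y : 'I_m * 'I_n.

Definition Hslice (t : nat) : rel ('I_m * 'I_n) :=
  fun x y => Hgraph x y && (minn x.2 y.2 == t).

Lemma Hslice_sub t x y : Hslice t x y -> Hgraph x y.
Proof. by case/andP. Qed.

Lemma Hslice_sym t : symmetric (Hslice t).
Proof. by move=> x y; rewrite /Hslice /Hgraph minnC orbC. Qed.

Lemma Hslice_simple t : simple_graph (Hslice t).
Proof. by split=> [|x]; [exact: Hslice_sym | rewrite /Hslice /Hgraph; lia]. Qed.

Lemma Hslice_bipartite t : bipartite (Hslice t).
Proof. by exists (fun x => x.2 == t :> nat) => x y; rewrite /Hslice /Hgraph; lia. Qed.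

(* A column-t vertex of row r is adjacent exactly to the column-(t+1)
   vertices of row > r, so these neighbourhoods form a chain. *)
Lemma Hslice_nested t x y x' y' : x.2 = t :> nat -> y.2 = t :> nat ->
  Hslice t x x' -> Hslice t y y' -> ~~ Hslice t x y' -> ~~ Hslice t y x' -> False.
Proof. by rewrite /Hslice /Hgraph; lia. Qed.

Lemma Hslice_end t x y : Hslice t x y -> x.2 = t :> nat \/ y.2 = t :> nat.
Proof. by rewrite /Hslice /Hgraph; lia. Qed.

Lemma Hslice_2K2_free t : induced_2K2_free (Hslice t).
Proof.
move=> a b c d ac bd ab bc cd ad; have sym := Hslice_sym t.
have ca : Hslice t c a by rewrite sym.
have db : Hslice t d b by rewrite sym.
have [a_t | c_t] := Hslice_end ac; have [b_t | d_t] := Hslice_end bd.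
- exact: (Hslice_nested a_t b_t ac bd).
- by apply: (Hslice_nested a_t d_t ac db); rewrite // sym.
- by apply: (Hslice_nested c_t b_t ca bd); rewrite // sym.
- by apply: (Hslice_nested c_t d_t ca db); rewrite // sym.
Qed.

Lemma Hgraph_minn_lt x y : Hgraph x y -> minn x.2 y.2 < n.-1.
Proof. by have := ltn_ord x.2; have := ltn_ord y.2; rewrite /Hgraph; lia. Qed.

Lemma Hgraph_slice x y : Hgraph x y -> Hslice (minn x.2 y.2) x y.
Proof. by rewrite /Hslice eqxx andbT. Qed.

End Slices.

Theorem lemma3p10 (m n : nat) : 2 <= m -> 2 <= n -> cochord_le (@Hgraph m n) n.-1.
Proof.
move=> _ _; exists (fun t : 'I_n.-1 => @Hslice m n t).
split; [|split; [|split]] => [t | t | t | x y Hxy].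
- exact: Hslice_simple.
- exact: Hslice_sub.
- apply: bipartite_2K2_free_cochordal; [exact: Hslice_bipartite | exact: Hslice_2K2_free].
- by exists (Ordinal (Hgraph_minn_lt Hxy)); apply: Hgraph_slice.
Qed.
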